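(* Let $k$ be a field of characteristic zero, $S=k[x,y]$, and let $I=(x^{\alpha},y^{\beta})$ and $J=(x^a,y^b)$ be ideals of $S$, where $a,b$ are positive integers, $0\le\alpha\le a$ and $0\le\beta\le b$. Then the graded $S$-module $I/J$ has the strong Lefschetz property.
   Context: $S$ is standard graded. A finite graded $S$-module $M=\bigoplus_i M_i$ has the strong Lefschetz property if there exists a linear form $\ell\in S_1$ such that the multiplication map $\times\ell^d\colon M_i\to M_{i+d}$ has maximal rank (is injective or surjective) for all $d>0$ and all $i$. *)

From HB Require Import structures.
From mathcomp Require Import all_boot all_order all_algebra.
From mathcomp Require Import mpoly.
Set Implicit Arguments. Unset Strict Implicit. Unset Printing Implicit Defensive.
Import GRing.Theory.
Local Open Scope ring_scope.

Definition varx (k : fieldType) : {mpoly k[2]} := 'X_(@Ordinal 2 0 isT).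
Definition vary (k : fieldType) : {mpoly k[2]} := 'X_(@Ordinal 2 1 isT).

(* f is homogeneous of (standard) degree d, i.e. f lies in S_d (0 included) *)
Definition homogeneous (k : fieldType) (d : nat) (f : {mpoly k[2]}) : bool :=
  f \is @ishomog1 2 k d mdeg.

Definition in_ideal2 (k : fieldType) (g1 g2 f : {mpoly k[2]}) : Prop :=
  exists u v : {mpoly k[2]}, f = u * g1 + v * g2.

(* For homogeneous ideals J ⊆ I of S (given by membership predicates), the
   graded module M = I/J has M_i = I_i / J_i.  The map  ×l^d : M_i -> M_(i+d)
   is injective resp. surjective: *)
Definition mult_injective (k : fieldType) (I J : {mpoly k[2]} -> Prop)
    (l : {mpoly k[2]}) (d i : nat) : Prop :=
  forall f, homogeneous i f -> I f -> J (l ^+ d * f) -> J f.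

Definition mult_surjective (k : fieldType) (I J : {mpoly k[2]} -> Prop)
    (l : {mpoly k[2]}) (d i : nat) : Prop :=
  forall g, homogeneous (i + d) g -> I g ->
    exists f, [/\ homogeneous i f, I f & J (g - l ^+ d * f)].

Definition strong_Lefschetz_quot (k : fieldType) (I J : {mpoly k[2]} -> Prop)
    : Prop :=
  exists l : {mpoly k[2]}, homogeneous 1 l /\
    forall d i : nat, (0 < d)%N ->
      mult_injective I J l d i \/ mult_surjective I J l d i.

From HB Require Import structures.
From mathcomp Require Import all_boot all_order all_algebra.
From mathcomp Require Import mpoly.
From mathcomp Require Import zify ring.
Set Implicit Arguments. Unset Strict Implicit. Unset Printing Implicit Defensive.
Import GRing.Theory.
Local Open Scope ring_scope.

(* Setting y = 1 identifies forms of degree u in k[x,y] with polynomials of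
   size at most u + 1; the ideal (x^A, y^B) then becomes the vanishing of the
   coefficients of index p with p < A and u < p + B, and multiplication by
   x + y becomes multiplication by X + 1.  The coefficient of x^(a-1) y^(b-1)
   is a perfect pairing between the degrees u and a + b - 2 - u of
   k[x,y]/(x^a, y^b).  Through it, injectivity (resp. surjectivity) of
   (X + 1)^d : (I/J)_i -> (I/J)_(i+d) reduces to the fact that the multiples
   of (X + 1)^d of size at most a + b - 1 - i meet trivially every coordinate
   subspace spanned by at most d monomials, and a dimension count decides
   which of the two cases occurs.  That fact is Hajos' lemma: in
   characteristic zero a nonzero multiple of (X - c)^n, c != 0, has at least
   n + 1 terms; the operator P |-> X P' - s P kills X^s and lowers the
   multiplicity of c by one, which gives an induction on the number of
   terms. *)

Section Spanning.
Variables (k : fieldType) (I : finType) (N : nat) (g : I -> {poly k}).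
Hypothesis size_g : forall j, (size (g j) <= N)%N.

Definition spanning := forall P : {poly k},
  (size P <= N)%N -> exists c : I -> k, P = \sum_j c j *: g j.

Let G : 'M[k]_(#|I|, N) := \matrix_(i < #|I|) poly_rV (g (enum_val i)).

Let sum_scaleE (c : I -> k) :
  \sum_j c j *: g j = rVpoly (\row_i c (enum_val i) *m G).
Proof.
rewrite mulmx_sum_row linear_sum (reindex _ (onW_bij _ (@enum_val_bij I))) /=.
by apply: eq_bigr => i _; rewrite linearZ /= /G rowK poly_rV_K // mxE.
Qed.

Let row_enum_valK (v : 'rV[k]_#|I|) : \row_i v 0 (enum_rank (enum_val i)) = v.
Proof. by apply/rowP => i; rewrite mxE enum_valK. Qed.

Lemma row_full_spanning : row_full G -> spanning.
Proof.
case/row_fullP => B BG P sizeP; exists (fun j => (poly_rV P *m B) 0 (enum_rank j)).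
by rewrite sum_scaleE row_enum_valK -mulmxA BG mulmx1 poly_rV_K.
Qed.

Lemma free_spanning : #|I| = N ->
  (forall c : I -> k, \sum_j c j *: g j = 0 -> forall j, c j = 0) -> spanning.
Proof.
move=> cardI free_g; apply: row_full_spanning.
suff /eqP rankG : row_free G by rewrite /row_full rankG cardI.
apply: inj_row_free => v vG0; have := free_g (fun j => v 0 (enum_rank j)).
rewrite sum_scaleE row_enum_valK vG0 linear0 => /(_ erefl) v0.
by apply/rowP => i; rewrite -(enum_valK i) v0 mxE.
Qed.

Lemma orthogonal_spanning :
  (forall W : {poly k}, (size W <= N)%N ->
     (forall j, \sum_(p < N) (g j)`_p * W`_p = 0) -> W = 0) -> spanning.
Proof.
move=> orth_g; apply: row_full_spanning.
rewrite /row_full -mxrank_tr -/(row_free G^T); apply: inj_row_free => v vG0.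
rewrite -[v]rVpolyK (orth_g (rVpoly v)) ?linear0 ?size_poly // => j.
transitivity ((v *m G^T) 0 (enum_rank j)); last by rewrite vG0 mxE.
by rewrite mxE; apply: eq_bigr => p _; rewrite !mxE coef_rVpoly_ord enum_rankK mulrC.
Qed.
End Spanning.

Section Sparse.
Variable k : fieldType.
Implicit Types (P Q : {poly k}) (T : seq nat).

Definition supported_on T P := forall r, r \notin T -> P`_r = 0.

Lemma supported_on_nil P : supported_on [::] P -> P = 0.
Proof. by move=> suppP; apply/polyP => r; rewrite coef0 suppP. Qed.

Lemma size_supported_on n T P :
  supported_on T P -> {in T, forall r, (r < n)%N} -> (size P <= n)%N.
Proof.
move=> suppP ltTn; apply/leq_sizeP => r le_nr; apply: suppP.
by apply: contraTN le_nr => /ltTn; rewrite -ltnNge.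
Qed.

Lemma coef_sum_seq_sub T (c : seq_sub T -> k) p :
  (\sum_(r : seq_sub T) c r *: 'X^(val r))`_p = \sum_(r | val r == p) c r.
Proof.
rewrite coef_sum [RHS]big_mkcond; apply: eq_bigr => r _.
by rewrite coefZ coefXn eq_sym; case: eqP; rewrite ?mulr1 ?mulr0.
Qed.

Lemma supported_on_sum_seq_sub T (c : seq_sub T -> k) :
  supported_on T (\sum_(r : seq_sub T) c r *: 'X^(val r)).
Proof.
move=> p pT; rewrite coef_sum_seq_sub big_pred0 // => r.
by apply: contraNF pT => /eqP <-; apply: ssvalP.
Qed.

Lemma coef_sum_seq_sub_val T (c : seq_sub T -> k) r0 :
  (\sum_(r : seq_sub T) c r *: 'X^(val r))`_(val r0) = c r0.
Proof. by rewrite coef_sum_seq_sub (big_pred1 r0) // => r; apply: val_eqE. Qed.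

Lemma coefM_eq0 P Q n :
  (forall j, (j <= n)%N -> P`_j = 0 \/ Q`_(n - j) = 0) -> (P * Q)`_n = 0.
Proof.
move=> h; rewrite coefM big1 // => j _.
by have [->|->] := h j (ltn_ord j); rewrite ?mul0r ?mulr0.
Qed.

Lemma sum_coef_mul_reversal n N (h W : {poly k}) :
  (0 < n)%N -> (size h <= N)%N -> (forall s, (n <= s)%N -> W`_s = 0) ->
  \sum_(s < N) h`_s * W`_s = (h * \poly_(r < n) W`_(n - 1 - r))`_(n - 1).
Proof.
case: n => // n _ sizeh Wn; rewrite subn1 /= coefM.
under [RHS]eq_bigr => j _.
  rewrite coef_poly ltnS leq_subr subKn; last by rewrite -ltnS.
  over.
rewrite !(big_ord_widen (N + n.+1) (fun j => h`_j * W`_j)) ?leq_addl ?leq_addr //.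
rewrite [LHS]big_mkcond [RHS]big_mkcond; apply: eq_bigr => j _.
case: ltnP => [_|le_Nj]; case: ltnP => [_|le_nj] //.
- by rewrite Wn ?mulr0.
- by rewrite (leq_sizeP _ _ sizeh) ?mul0r.
Qed.

Lemma sum_coefXn_mul n N (W : {poly k}) :
  (n < N)%N -> \sum_(s < N) ('X^n)`_s * W`_s = W`_n.
Proof.
move=> lt_nN; under eq_bigr do rewrite coefXn mulr_natl mulrb.
by rewrite -big_mkcond big_ord1_eq lt_nN.
Qed.

Lemma dvdp_deriv_exp (q p : {poly k}) n : q ^+ n.+1 %| p -> q ^+ n %| p^`().
Proof.
case/dvdpP=> r ->; rewrite derivM deriv_exp /= -mulr_natr mulrAC.
by rewrite dvdp_add // !dvdp_mull // dvdp_exp2l.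
Qed.

Hypothesis char0 : [pchar k] =i pred0.

Lemma eqr_nat_pchar0 m n : (m%:R == n%:R :> k) = (m == n).
Proof.
wlog le_mn : m n / (m <= n)%N.
  by move=> W; case: (leqP m n) => [|/ltnW] /W; rewrite // eq_sym => ->; rewrite eq_sym.
by rewrite eq_sym -subr_eq0 -natrB // (proj1 (pcharf0P k) char0) subn_eq0 eqn_leq le_mn.
Qed.

Lemma coef_euler P s r : ('X * P^`() - s%:R%:P * P)`_r = (r%:R - s%:R) * P`_r.
Proof. by rewrite coefB coefCM coefXM coef_deriv; case: r => [|r] /=; ring. Qed.

Lemma sparse_dvdp_XsubC_exp_eq0 (c : k) n T P :
  c != 0 -> (size T <= n)%N -> supported_on T P -> ('X - c%:P) ^+ n %| P -> P = 0.
Proof.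
move=> c_neq0; elim: T n P => [|s T IH] n P sizeT suppP dvdP.
  exact: supported_on_nil.
case: n sizeT dvdP => // n sizeT dvdP.
have euler0 : 'X * P^`() - s%:R%:P * P = 0.
  apply: (IH n) => //.
    move=> r rT; rewrite coef_euler.
    have [->|rs] := eqVneq r s; first by rewrite subrr mul0r.
    by rewrite suppP ?mulr0 // inE negb_or rs.
  by rewrite dvdp_sub ?dvdp_mull ?dvdp_deriv_exp // (dvdp_trans (dvdp_exp2l _ (leqnSn n))).
have monoP : P = P`_s *: 'X^s.
  apply/polyP => r; rewrite coefZ coefXn.
  have [->|rs] := eqVneq r s; first by rewrite mulr1.
  move/(congr1 (coefp r))/eqP: euler0; rewrite /= coef_euler coef0 mulf_eq0 subr_eq0.
  by rewrite eqr_nat_pchar0 (negbTE rs) mulr0 => /eqP.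
have : root P c.
  by rewrite -dvdp_XsubCl; exact: dvdp_trans (dvdp_exp2l _ (ltn0Sn n)) dvdP.
rewrite monoP rootE hornerZ hornerXn mulf_eq0 expf_eq0 (negbTE c_neq0) andbF orbF.
by move/eqP->; rewrite scale0r.
Qed.

Lemma XsubC_exp_mul_sparse_eq0 (c : k) n T Q R :
  c != 0 -> (size T <= n)%N -> supported_on T R ->
  ('X - c%:P) ^+ n * Q + R = 0 -> Q = 0 /\ R = 0.
Proof.
move=> c_neq0 sizeT suppR; rewrite addrC => /eqP; rewrite addr_eq0 => /eqP eqR.
have R0 : R = 0.
  by apply: sparse_dvdp_XsubC_exp_eq0 c_neq0 sizeT suppR _; rewrite eqR dvdpNr dvdp_mulIl.
split=> //; move/eqP: eqR; rewrite R0 eq_sym oppr_eq0 mulf_eq0 expf_eq0.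
by rewrite polyXsubC_eq0 andbF => /eqP.
Qed.

Lemma XsubC_exp_sparse_decomposition (c : k) m T P :
  c != 0 -> uniq T -> {in T, forall r, (r < m + size T)%N} ->
  (size P <= m + size T)%N ->
  exists Q R, [/\ (size Q <= m)%N, supported_on T R & P = ('X - c%:P) ^+ size T * Q + R].
Proof.
move=> c_neq0 uniqT ltT sizeP; set n := size T in ltT sizeP *.
set q := ('X - c%:P) ^+ n; set Iq := seq_sub (iota 0 m); set IT := seq_sub T.
pose g (j : Iq + IT) := match j with inl j => q * 'X^(val j) | inr r => 'X^(val r) end.
pose Q (c' : Iq + IT -> k) := \sum_(j : Iq) c' (inl j) *: 'X^(val j).
pose R (c' : Iq + IT -> k) := \sum_(r : IT) c' (inr r) *: 'X^(val r).
have sum_gE c' : \sum_j c' j *: g j = q * Q c' + R c'.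
  rewrite big_sumType /Q /R mulr_sumr; congr (_ + _).
  by apply: eq_bigr => j _; rewrite scalerAr.
have size_g j : (size (g j) <= m + n)%N.
  case: j => [j|r] /=; last by rewrite size_polyXn; exact: ltT (ssvalP r).
  apply: leq_trans (size_polyMleq _ _) _; rewrite size_polyXn size_exp_XsubC.
  by have := ssvalP j; rewrite mem_iota; lia.
have free_g c' : \sum_j c' j *: g j = 0 -> forall j, c' j = 0.
  rewrite sum_gE => /(XsubC_exp_mul_sparse_eq0 c_neq0 (leqnn n)).
  case=> [|Q0 R0]; first exact: supported_on_sum_seq_sub.
  case=> j; [move: (coef_sum_seq_sub_val (c' \o inl) j)
            | move: (coef_sum_seq_sub_val (c' \o inr) j)] => /= <-.
    by rewrite -/(Q c') Q0 coef0.
  by rewrite -/(R c') R0 coef0.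
have cardI : #|{: Iq + IT}| = (m + n)%N.
  by rewrite card_sum !card_seq_sub ?iota_uniq ?size_iota.
have [c' ->] := free_spanning size_g cardI free_g sizeP.
exists (Q c'), (R c'); split; last exact: sum_gE.
  by apply: size_supported_on (supported_on_sum_seq_sub _) _ => j; rewrite mem_iota.
exact: supported_on_sum_seq_sub.
Qed.
End Sparse.

(* A polynomial F of size at most u + 1 stands for the form
   \sum_p F_p x^p y^(u-p) of degree u; [mon_in_ideal_xy A B u p] says that
   x^p y^(u-p) lies in (x^A, y^B). *)
Definition mon_in_ideal_xy (A B u p : nat) : bool := (A <= p)%N || (p + B <= u)%N.

Definition in_ideal_xy (k : fieldType) (A B u : nat) (F : {poly k}) : Prop :=
  forall p, ~~ mon_in_ideal_xy A B u p -> F`_p = 0.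

Section Lefschetz.
Variables (k : fieldType) (c : k) (a b al be : nat).
Hypotheses (char0 : [pchar k] =i pred0) (c_neq0 : c != 0) (a_gt0 : (0 < a)%N).
Local Notation ell := ('X - c%:P).

Definition ell_mult_injective d i := forall F : {poly k},
  (size F <= i.+1)%N -> in_ideal_xy al be i F ->
  in_ideal_xy a b (i + d) (ell ^+ d * F) -> in_ideal_xy a b i F.

Definition ell_mult_surjective d i := forall G : {poly k},
  (size G <= (i + d).+1)%N ->
  exists F : {poly k}, [/\ (size F <= i.+1)%N, in_ideal_xy al be i F &
                          in_ideal_xy a b (i + d) (G - ell ^+ d * F)].

(* The exponents r < a + b - 1 - i of the monomials x^r y^(a+b-2-i-r) whose
   partner x^(a-1-r) y^(i+1+r-a) of degree i under the pairing is not a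
   monomial of I (or is no monomial at all); there are
   a + b - 1 - i - dim (I/J)_i of them. *)
Definition dual_complement i := [seq r <- iota 0 (a + b - 1 - i) |
  (a <= r)%N || ~~ ((a - 1 - r <= i)%N && mon_in_ideal_xy al be i (a - 1 - r))].

Lemma ell_injective d i : (i + d <= a + b - 2)%N -> (d <= size (dual_complement i))%N ->
  ell_mult_injective d i.
Proof.
move=> le_t ledT F sizeF IF JellF p /norP[]; rewrite -!ltnNge => lt_pa lt_ib.
have [lt_ip|le_pi] := ltnP i p; first by rewrite (leq_sizeP _ _ sizeF).
set m := (a + b - 1 - (i + d))%N; set T := take d (dual_complement i).
have sizeT : size T = d by rewrite size_takel.
have uniqT : uniq T by rewrite take_uniq ?filter_uniq ?iota_uniq.
have ltT : {in T, forall r, (r < m + size T)%N}.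
  by move=> r /mem_take; rewrite mem_filter mem_iota sizeT /m; lia.
have [|Q [R [sizeQ suppR XE]]] :=
  XsubC_exp_sparse_decomposition char0 (P := 'X^(a - 1 - p)) c_neq0 uniqT ltT.
  by rewrite size_polyXn sizeT /m; lia.
(* F_p is the pairing of F with x^(a-1-p) y^(b-1-i+p). *)
have -> : F`_p = ('X^(a - 1 - p) * F)`_(a - 1).
  by rewrite coefXnM ltnNge leq_subr /=; congr F`_ _; lia.
rewrite XE sizeT mulrDl coefD mulrAC !coefM_eq0 ?addr0 // => j le_ja.
  have [le_mj|lt_jm] := leqP m (a - 1 - j); [right | left].
    by rewrite (leq_sizeP _ _ sizeQ).
  by apply: JellF; rewrite /mon_in_ideal_xy /m; lia.
have [jT|jNT] := boolP (j \in T); last by left; apply: suppR.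
right; move/mem_take: jT; rewrite mem_filter mem_iota => /andP[].
rewrite (_ : (a <= j)%N = false) /=; last by lia.
rewrite negb_and -ltnNge => /orP[lt_i|notI] _; first by rewrite (leq_sizeP _ _ sizeF).
exact: IF.
Qed.

Lemma ell_dual_eq0 d i : (i + d <= a + b - 2)%N -> (size (dual_complement i) <= d)%N ->
  forall V : {poly k}, (size V <= a + b - 1 - (i + d))%N ->
  (forall p, (p <= i)%N -> (p < a)%N -> mon_in_ideal_xy al be i p ->
     (ell ^+ d * V)`_(a - 1 - p) = 0) ->
  V = 0.
Proof.
move=> le_t leTd V sizeV orthV; set H := ell ^+ d * V.
have : H = 0.
  apply: (sparse_dvdp_XsubC_exp_eq0 char0 c_neq0 leTd); last exact: dvdp_mulIl.
  move=> r; rewrite mem_filter mem_iota /= negb_and negb_or negbK.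
  case/orP => [/andP[lt_ra /andP[le_i Ir]]|out].
    have -> : r = (a - 1 - (a - 1 - r))%N by lia.
    by rewrite orthV //; lia.
  have sizeH : (size H <= a + b - 1 - i)%N.
    apply: leq_trans (size_polyMleq _ _) _; rewrite size_exp_XsubC addSn /=.
    by apply: leq_trans (leq_add (leqnn d) sizeV) _; lia.
  by move: out; rewrite add0n -leqNgt => /(leq_sizeP _ _ sizeH).
by move/eqP; rewrite mulf_eq0 expf_eq0 polyXsubC_eq0 andbF => /eqP.
Qed.

Lemma ell_dual_orthogonal d i (W : {poly k}) :
  (i + d <= a + b - 2)%N -> (size (dual_complement i) <= d)%N -> (size W <= (i + d).+1)%N ->
  (forall q, (q <= i + d)%N -> mon_in_ideal_xy a b (i + d) q -> W`_q = 0) ->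
  (forall p, (p <= i)%N -> mon_in_ideal_xy al be i p ->
     \sum_(s < (i + d).+1) (ell ^+ d * 'X^p)`_s * W`_s = 0) ->
  W = 0.
Proof.
move=> le_t leTd sizeW WJ orthW; set t := (i + d)%N in le_t sizeW WJ orthW.
have W_ge_a s : (a <= s)%N -> W`_s = 0.
  move=> le_as; have [le_st|lt_ts] := leqP s t; first by apply: WJ; rewrite /mon_in_ideal_xy ?le_as.
  exact: (leq_sizeP _ _ sizeW).
(* V is the form of degree a + b - 2 - t that pairs with forms as W does. *)
set V := \poly_(r < a) W`_(a - 1 - r).
have sizeV : (size V <= a + b - 1 - t)%N.
  apply/leq_sizeP => r le_r; rewrite coef_poly; case: ltnP => // lt_ra.
  by apply: WJ; rewrite /mon_in_ideal_xy; lia.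
have V0 : V = 0.
  apply: (ell_dual_eq0 le_t leTd sizeV) => p le_pi lt_pa Ip.
  rewrite -[RHS](orthW p le_pi Ip) (sum_coef_mul_reversal a_gt0 _ W_ge_a); last first.
    apply: leq_trans (size_polyMleq _ _) _.
    by rewrite size_exp_XsubC size_polyXn addSn /= /t; lia.
  have le_p : (p <= a - 1)%N by lia.
  by rewrite mulrAC coefMXn ltnNge le_p.
apply/polyP => s; rewrite coef0; have [lt_sa|/W_ge_a //] := ltnP s a.
move/(congr1 (coefp (a - 1 - s))): V0; rewrite /= coef_poly coef0.
by rewrite (_ : (a - 1 - s < a)%N) 1?subKn //; lia.
Qed.

Lemma ell_surjective d i : (i + d <= a + b - 2)%N -> (size (dual_complement i) <= d)%N ->
  ell_mult_surjective d i.
Proof.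
move=> le_t leTd G sizeG; set t := (i + d)%N in le_t sizeG *.
set LI := [seq p <- iota 0 i.+1 | mon_in_ideal_xy al be i p].
set LJ := [seq q <- iota 0 t.+1 | mon_in_ideal_xy a b t q].
have memLI p : (p \in LI) = (p <= i)%N && mon_in_ideal_xy al be i p.
  by rewrite mem_filter mem_iota andbC ltnS.
have memLJ q : (q \in LJ) = (q <= t)%N && mon_in_ideal_xy a b t q.
  by rewrite mem_filter mem_iota andbC ltnS.
pose g (j : seq_sub LI + seq_sub LJ) :=
  match j with inl p => ell ^+ d * 'X^(val p) | inr q => 'X^(val q) end.
have size_g j : (size (g j) <= t.+1)%N.
  case: j => [p|q] /=; [move: (ssvalP p) | move: (ssvalP q)].
    rewrite memLI => /andP[le_pi _]; apply: leq_trans (size_polyMleq _ _) _.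
    by rewrite size_exp_XsubC size_polyXn addSn /= /t; lia.
  by rewrite memLJ size_polyXn => /andP[].
have [|c' ->] := orthogonal_spanning size_g _ sizeG.
  move=> W sizeW orthW; apply: (ell_dual_orthogonal le_t leTd sizeW).
    move=> q le_qt Jq; have qLJ : q \in LJ by rewrite memLJ le_qt.
    by rewrite -(sum_coefXn_mul _ (le_qt : q < t.+1)%N) (orthW (inr (SeqSub qLJ))).
  move=> p le_pi Ip; have pLI : p \in LI by rewrite memLI le_pi.
  exact: (orthW (inl (SeqSub pLI))).
exists (\sum_(p : seq_sub LI) c' (inl p) *: 'X^(val p)); split.
- apply: size_supported_on (supported_on_sum_seq_sub _) _ => p.
  by rewrite memLI ltnS => /andP[].
- by move=> p Ip; apply: supported_on_sum_seq_sub; rewrite memLI (negbTE Ip) andbF.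
rewrite big_sumType /= mulr_sumr addrAC.
under [X in _ - X]eq_bigr do rewrite -scalerAr.
rewrite subrr add0r => q Jq; apply: supported_on_sum_seq_sub.
by rewrite memLJ (negbTE Jq) andbF.
Qed.

Lemma ell_mult_max_rank d i : ell_mult_injective d i \/ ell_mult_surjective d i.
Proof.
have [le_t|lt_t] := leqP (i + d) (a + b - 2).
  have [le_dT|/ltnW le_Td] := leqP d (size (dual_complement i)).
    by left; apply: ell_injective.
  by right; apply: ell_surjective.
right=> G _; exists 0; split; rewrite ?size_poly0 // => p; rewrite ?coef0 //.
by rewrite /mon_in_ideal_xy negb_or -!ltnNge => /andP[]; lia.
Qed.
End Lefschetz.

Section Monomials.
Variables (n : nat) (R : nzRingType).

Lemma mulmn_mnm1_le (j : 'I_n) A (m : 'X_{1..n}) : (U_(j) *+ A <= m)%MM = (A <= m j)%N.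
Proof.
apply/mnm_lepP/idP => [/(_ j)|le_A j']; first by rewrite mulmnE mnm1E eqxx mul1n.
by rewrite mulmnE mnm1E; case: eqP => [<-|]; rewrite ?mul1n ?mul0n.
Qed.

Lemma mcoeffMX_eq0 (p : {mpoly R[n]}) e m : ~~ (e <= m)%MM -> (p * 'X_[e])@_m = 0.
Proof.
move=> le_em; rewrite {1}(mpolyE p) mulr_suml raddf_sum /= big1 // => m' _.
rewrite -scalerAl -mpolyXD mcoeffZ mcoeffX.
by case: eqP le_em => [<-|_ _]; rewrite ?lem_addl ?mulr0.
Qed.
End Monomials.

Local Notation ix := (@Ordinal 2 0 isT).
Local Notation iy := (@Ordinal 2 1 isT).

Lemma ord2_cases (j : 'I_2) : j = ix \/ j = iy.
Proof. by case: j => [[|[|//]]] ? /=; [left|right]; apply: val_inj. Qed.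

Lemma mnm2_eq (m1 m2 : 'X_{1..2}) : m1 ix = m2 ix -> m1 iy = m2 iy -> m1 = m2.
Proof. by move=> e0 e1; apply/mnmP => j; case: (ord2_cases j) => ->. Qed.

Lemma mdeg2 (m : 'X_{1..2}) : mdeg m = (m ix + m iy)%N.
Proof.
rewrite mdegE big_ord_recr big_ord_recr big_ord0 /= add0n.
by congr (m _ + m _)%N; apply: val_inj.
Qed.

Section Dehomogenization.
Variable k : fieldType.
Implicit Types (f g : {mpoly k[2]}) (F : {poly k}).

Definition dehomogenize : {rmorphism {mpoly k[2]} -> {poly k}} :=
  GRing.RMorphism.clone _ _ (mmap (@polyC k) (fun j => if j == ix then 'X else 1)) _.

Lemma dehomogenizeX m : dehomogenize 'X_[m] = 'X^(m ix).
Proof.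
rewrite /dehomogenize /= mmapX /mmap1 big_ord_recr big_ord_recr big_ord0 /=.
by rewrite expr1n mul1r mulr1; congr 'X^(m _); apply: val_inj.
Qed.

Lemma coef_dehomogenize f q : (dehomogenize f)`_q = \sum_(m <- msupp f | m ix == q) f@_m.
Proof.
rewrite {1}(mpolyE f) /dehomogenize raddf_sum coef_sum [RHS]big_mkcond /=.
apply: eq_bigr => m _.
by rewrite mmapZ -/dehomogenize dehomogenizeX coefCM coefXn eq_sym mulr_natr mulrb.
Qed.

Lemma homogeneous_mdeg u f :
  homogeneous u f -> forall m, m \in msupp f -> (m ix + m iy)%N = u.
Proof. by move=> /dhomogP homf m /homf <-; apply/esym/mdeg2. Qed.

Lemma coef_dehomogenize_homog u f m :
  homogeneous u f -> m \in msupp f -> (dehomogenize f)`_(m ix) = f@_m.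
Proof.
move=> homf mf; rewrite coef_dehomogenize big_mkcond (bigD1_seq m) ?msupp_uniq //= eqxx.
rewrite big1_seq ?addr0 // => m' /andP[neq_m mf']; case: eqP => // eq_x.
case/eqP: neq_m; apply: mnm2_eq => //.
by have := homogeneous_mdeg homf mf; have := homogeneous_mdeg homf mf'; lia.
Qed.

Lemma size_dehomogenize_homog u f : homogeneous u f -> (size (dehomogenize f) <= u.+1)%N.
Proof.
move=> homf; apply/leq_sizeP => q lt_uq.
rewrite coef_dehomogenize big1_seq // => m /andP[/eqP mq mf].
by have := homogeneous_mdeg homf mf; lia.
Qed.

Definition homogenize u F : {mpoly k[2]} :=
  \sum_(p < u.+1) F`_p *: 'X_[U_(ix) *+ p + U_(iy) *+ (u - p)].

Lemma homogenize_homogeneous u F : homogeneous u (homogenize u F).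
Proof.
apply: rpred_sum => p _; rewrite rpredZ // dhomogX; apply/eqP/(etrans (mdeg2 _)).
rewrite !mnmDE !mulmnE !mnm1E /=.
by have := ltn_ord p; lia.
Qed.

Lemma homogenizeK u F : (size F <= u.+1)%N -> dehomogenize (homogenize u F) = F.
Proof.
move=> sizeF; rewrite /dehomogenize raddf_sum /=.
under eq_bigr do rewrite mmapZ -/dehomogenize dehomogenizeX mnmDE !mulmnE !mnm1E /=
  mul1n mul0n addn0 mul_polyC.
by rewrite -poly_def -/(take_poly _ _) take_poly_id.
Qed.

Lemma varxE A : varx k ^+ A = 'X_[U_(ix) *+ A].
Proof. exact: mpolyXn. Qed.

Lemma varyE B : vary k ^+ B = 'X_[U_(iy) *+ B].
Proof. exact: mpolyXn. Qed.

Lemma in_ideal2_dehomogenize u A B f : homogeneous u f ->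
  in_ideal2 (varx k ^+ A) (vary k ^+ B) f <-> in_ideal_xy A B u (dehomogenize f).
Proof.
move=> homf; have degf := homogeneous_mdeg homf; split.
  move=> [U [V eqf]] p; rewrite /mon_in_ideal_xy negb_or -!ltnNge => /andP[lt_pA lt_uB].
  rewrite coef_dehomogenize big1_seq // => m /andP[/eqP mp /degf degm].
  rewrite eqf mcoeffD varxE varyE !mcoeffMX_eq0 ?addr0 // mulmn_mnm1_le -ltnNge; lia.
move=> Jf; have Jm m : m \in msupp f -> ~~ (A <= m ix)%N -> (B <= m iy)%N.
  move=> mf; rewrite -ltnNge => lt_mA; apply: contraT; rewrite -ltnNge => lt_mB.
  have := mf; rewrite mcoeff_msupp -(coef_dehomogenize_homog homf mf) Jf ?eqxx //.
  by rewrite /mon_in_ideal_xy negb_or -!ltnNge lt_mA /=; have := degf _ mf; lia.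
exists (\sum_(m <- msupp f | (A <= m ix)%N) f@_m *: 'X_[m - U_(ix) *+ A]).
exists (\sum_(m <- msupp f | ~~ (A <= m ix)%N) f@_m *: 'X_[m - U_(iy) *+ B]).
rewrite {1}(mpolyE f) (bigID (fun m : 'X_{1..2} => (A <= m ix)%N)) /= !mulr_suml varxE varyE.
congr (_ + _); rewrite big_seq_cond [RHS]big_seq_cond; apply: eq_bigr => m /andP[mf cond];
  rewrite -scalerAl -mpolyXD submK // mulmn_mnm1_le //; exact: Jm.
Qed.
End Dehomogenization.
Arguments dehomogenize {k}.

Theorem corollary3p2 (k : fieldType) (a b alpha beta : nat) :
  [pchar k] =i pred0 ->
  (0 < a)%N -> (0 < b)%N -> (alpha <= a)%N -> (beta <= b)%N ->
  strong_Lefschetz_quot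
    (in_ideal2 (varx k ^+ alpha) (vary k ^+ beta))
    (in_ideal2 (varx k ^+ a) (vary k ^+ b)).
Proof.
move=> char0 a_gt0 _ _ _; set ell := varx k + vary k.
have ell_homog : homogeneous 1 ell.
  by rewrite /homogeneous rpredD // dhomogX; apply/eqP/mdeg1.
have homog_ellM d i f : homogeneous i f -> homogeneous (i + d) (ell ^+ d * f).
  by move=> homf; have := dhomogM (dhomogMn d ell_homog) homf; rewrite mul1n addnC.
have dehom_ellM d f : dehomogenize (ell ^+ d * f) = ('X - (-1)%:P) ^+ d * dehomogenize f.
  by rewrite rmorphM rmorphXn rmorphD /= !dehomogenizeX !mnm1E /= polyCN opprK.
have c_neq0 : (-1 : k) != 0 by rewrite oppr_eq0 oner_eq0.
exists ell; split=> // d i _.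
have [inj|surj] := ell_mult_max_rank b alpha beta char0 c_neq0 a_gt0 d i; [left|right].
  move=> f homf /(in_ideal2_dehomogenize _ _ homf) If.
  move=> /(in_ideal2_dehomogenize _ _ (homog_ellM d i f homf)); rewrite dehom_ellM => Jf.
  exact/(in_ideal2_dehomogenize _ _ homf)/(inj _ (size_dehomogenize_homog homf)).
move=> g homg _; have [F [sizeF IF JF]] := surj _ (size_dehomogenize_homog homg).
have homF := homogenize_homogeneous i F.
exists (homogenize i F); split=> //.
  by apply/(in_ideal2_dehomogenize _ _ homF); rewrite homogenizeK.
have homgF : homogeneous (i + d) (g - ell ^+ d * homogenize i F).
  by rewrite /homogeneous rpredB //; apply: homog_ellM.
by apply/(in_ideal2_dehomogenize _ _ homgF); rewrite rmorphB dehom_ellM homogenizeK.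
Qed.
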